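(* Let $G$ be a path or a cycle and let $I_s,I_t$ be independent sets of $G$. Then the minimum length of a reconfiguration sequence from $I_s$ to $I_t$ is exactly $\mathrm{cc}(I_s\triangle I_t)$.
   Context: All graphs are finite, simple and undirected. For $V'\subseteq V(G)$, $\mathrm{cc}(V')$ denotes the number of connected components of the induced subgraph $G[V']$. A reconfiguration sequence from $I_s$ to $I_t$ of length $\ell$ is a sequence $\langle I_s=I_0,\dots,I_\ell=I_t\rangle$ of independent sets of $G$ such that $G[I_{i-1}\triangle I_i]$ is connected for every $i\in\{1,\dots,\ell\}$. *)

From mathcomp Require Import all_boot.
Set Implicit Arguments. Unset Strict Implicit. Unset Printing Implicit Defensive.


Definition simple_graph (T : finType) (e : rel T) : Prop :=
  symmetric e /\ irreflexive e.

Definition path_rel (n : nat) : rel 'I_n :=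
  fun i j => (i.+1 == j :> nat) || (j.+1 == i :> nat).

(* The cycle C_n on vertices 0..n-1 (meaningful as a simple graph for n >= 3) *)
Definition cycle_rel (n : nat) : rel 'I_n :=
  fun i j => (i.+1 %% n == j :> nat) || (j.+1 %% n == i :> nat).

Definition isomorphic_to (T : finType) (e : rel T) (n : nat) (r : rel 'I_n) : Prop :=
  exists f : 'I_n -> T, bijective f /\ forall i j, e (f i) (f j) = r i j.

Definition is_path_graph (T : finType) (e : rel T) : Prop :=
  exists n, @isomorphic_to T e n (@path_rel n).

Definition is_cycle_graph (T : finType) (e : rel T) : Prop :=
  exists n, 3 <= n /\ @isomorphic_to T e n (@cycle_rel n).

Definition independent (T : finType) (e : rel T) (I : {set T}) : bool :=
  [forall x in I, forall y in I, ~~ e x y].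

Definition induced_rel (T : finType) (e : rel T) (S : {set T}) : rel T :=
  fun x y => [&& x \in S, y \in S & e x y].

Definition connected_induced (T : finType) (e : rel T) (S : {set T}) : bool :=
  (S != set0) && [forall x in S, forall y in S, connect (induced_rel e S) x y].

Definition cc (T : finType) (e : rel T) (S : {set T}) : nat :=
  #|[set [set y in S | connect (induced_rel e S) x y] | x in S]|.

Definition symdiff (T : finType) (A B : {set T}) : {set T} :=
  (A :\: B) :|: (B :\: A).

(* [:: I_1; ...; I_l] is such that <Is = I_0, I_1, ..., I_l = It> is a
   reconfiguration sequence of length l = size s. *)
Definition reconf_seq (T : finType) (e : rel T) (Is It : {set T})
    (s : seq {set T}) : bool :=
  [&& all (independent e) (Is :: s),
      path (fun A B => connected_induced e (symdiff A B)) Is s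
    & last Is s == It].

From mathcomp Require Import all_boot zify.
Set Implicit Arguments. Unset Strict Implicit. Unset Printing Implicit Defensive.

(* Upper bound: flip the components of Is (+) It one at a time.  After
   flipping a union U of components the current set agrees with It on U and
   with Is elsewhere.  An edge from x in U to a current vertex y outside U
   forces y outside Is (+) It (else y would lie in the component of x); so y,
   being in Is, is in It as well, and so is x.

   Lower bound: a path on n vertices is an induced subgraph of the cycle
   C_(n+1), so we may work inside a cycle.  Call i a tail of A if i is in A
   and i+1 is not.  Every component of A contains a tail unless A is the whole
   cycle, so cc(A) is at most the number of tails.  A connected set has at most
   one tail, and since a set has twice as many boundary edges as tails, tails
   are subadditive under symmetric difference; hence each reconfiguration step
   adds at most one tail to Is (+) I_k. *)

Section Scanl.

Variables (T1 : Type) (T2 : eqType) (f : T1 -> T2 -> T1).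

Lemma all_scanl (P : pred T1) z s :
  (forall k, P (foldl f z (take k s))) -> all P (z :: scanl f z s).
Proof.
elim: s z => [|c s IH] z Pfold /=; first by rewrite (Pfold 0).
by rewrite (Pfold 0); exact: IH (fun k => Pfold k.+1).
Qed.

Lemma path_scanl (R : rel T1) z (s : seq T2) :
  (forall a c, c \in s -> R a (f a c)) -> path R z (scanl f z s).
Proof.
elim: s z => [|c s IH] z Rf //=.
by rewrite Rf ?mem_head //=; apply: IH => a d ds; rewrite Rf // inE ds orbT.
Qed.

Lemma last_scanl z s : last z (scanl f z s) = foldl f z s.
Proof. by elim: s z => [|c s IH] z //=. Qed.

End Scanl.

Section Symdiff.

Variable T : finType.
Implicit Types A B C : {set T}.

Lemma in_symdiff A B x : (x \in symdiff A B) = ((x \in A) != (x \in B)).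
Proof. by rewrite !inE; case: (x \in A); case: (x \in B). Qed.

Lemma symdiffxx A : symdiff A A = set0.
Proof. by apply/setP => x; rewrite in_symdiff inE eqxx. Qed.

Lemma symdiffK A B : symdiff A (symdiff A B) = B.
Proof. by apply/setP => x; rewrite !in_symdiff; case: (x \in A); case: (x \in B). Qed.

Lemma symdiff_trans A B C : symdiff (symdiff A B) (symdiff B C) = symdiff A C.
Proof.
by apply/setP => x; rewrite !in_symdiff; case: (x \in A); case: (x \in B); case: (x \in C).
Qed.

Lemma foldl_symdiff A (cs : seq {set T}) :
  uniq cs -> {in cs &, forall C D, C != D -> [disjoint C & D]} ->
  foldl (@symdiff T) A cs = symdiff A (\bigcup_(C <- cs) C).
Proof.
elim: cs A => [|C cs IH] A /=.
  by move=> _ _; rewrite big_nil; apply/setP => x; rewrite in_symdiff inE; case: (x \in A).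
case/andP => Ccs cs_uniq disj; rewrite IH //; last first.
  by move=> D E Dcs Ecs; apply: disj; rewrite inE ?Dcs ?Ecs orbT.
have C_disj : [disjoint C & \bigcup_(D <- cs) D].
  rewrite bigcup_seq; apply: bigcup_disjoint => D Dcs.
  by apply: disj; rewrite ?inE ?Dcs ?eqxx ?orbT //; apply: contraNneq Ccs => ->.
apply/setP => x; rewrite big_cons !in_symdiff inE.
by case xC: (x \in C); rewrite ?(disjointFr C_disj xC); case: (x \in A).
Qed.

End Symdiff.

Definition reconf_step (T : finType) (e : rel T) : rel {set T} :=
  fun A B => connected_induced e (symdiff A B).

Lemma connect_invariant (T : finType) (r : rel T) (P : pred T) x y :
  (forall u v, P u -> r u v -> P v) -> P x -> connect r x y -> P y.
Proof.
move=> Pr Px /connectP [p pth ->].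
by elim: p x Px pth => //= z p IH x Px /andP [xz]; apply: IH (Pr _ _ Px xz).
Qed.

Lemma independentP (T : finType) (e : rel T) (I : {set T}) :
  reflect {in I &, forall x y, ~~ e x y} (independent e I).
Proof.
apply: (iffP forall_inP) => [indep x y xI yI | indep x xI].
  by move/forall_inP: (indep x xI); apply.
by apply/forall_inP => y; apply: indep.
Qed.

Lemma connected_inducedP (T : finType) (e : rel T) (C : {set T}) :
  reflect (C != set0 /\ {in C &, forall x y, connect (induced_rel e C) x y})
          (connected_induced e C).
Proof.
apply: (iffP andP) => [[C0 /forall_inP conn] | [C0 conn]]; split => //.
  by move=> x y xC; move/forall_inP: (conn x xC); apply.
by apply/forall_inP => x xC; apply/forall_inP => y; apply: conn.
Qed.

Section Components.

Variables (T : finType) (e : rel T).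
Hypothesis e_sym : symmetric e.
Implicit Types S C U Is It : {set T}.

Lemma induced_rel_sym S : symmetric (induced_rel e S).
Proof. by move=> x y; rewrite /induced_rel e_sym andbCA. Qed.

Lemma connect_induced_restrict S C x y :
  (forall u v, u \in C -> induced_rel e S u v -> v \in C) -> x \in C ->
  connect (induced_rel e S) x y -> connect (induced_rel e C) x y.
Proof.
move=> closedC xC xy.
suff /andP [] : (y \in C) && connect (induced_rel e C) x y by [].
apply: (connect_invariant (P := fun v => (v \in C) && connect (induced_rel e C) x v)) xy;
  last by rewrite xC connect0.
move=> u v /andP [uC xu] uv; have vC := closedC u v uC uv.
rewrite vC (connect_trans xu) // connect1 //.
by case/and3P: uv => _ _ euv; rewrite /induced_rel uC vC.
Qed.

Definition components S := equivalence_partition (connect (induced_rel e S)) S.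

Lemma components_partition S : partition (components S) S.
Proof.
apply: equivalence_partitionP => x y z _ _ _; split => // xy.
exact: (same_connect (sym_connect_sym (induced_rel_sym S)) xy z).
Qed.

Lemma component_closed S C :
  C \in components S -> forall x y, x \in C -> induced_rel e S x y -> y \in C.
Proof.
case/imsetP => a _ -> x y; rewrite !inE => /andP [_ ax] xy.
by case/and3P: (xy) => _ -> _; rewrite (connect_trans ax) ?connect1.
Qed.

Lemma connected_component S C : C \in components S -> connected_induced e C.
Proof.
move=> CS; have [/eqP coverS _ nonempty] := and3P (components_partition S).
apply/connected_inducedP; split; first by apply: contraNneq nonempty => <-.
move=> x y xC yC; apply: (connect_induced_restrict (component_closed CS) xC).
case/imsetP: CS xC yC => a _ ->; rewrite !inE => /andP [_ ax] /andP [_ ay].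
by apply: connect_trans ay; rewrite (sym_connect_sym (induced_rel_sym S)).
Qed.

Lemma bigcup_components_sub S (cs : seq {set T}) :
  {subset cs <= components S} -> \bigcup_(C <- cs) C \subset S.
Proof.
move=> sub_cs; rewrite bigcup_seq -(cover_partition (components_partition S)).
by apply/bigcupsP => C /sub_cs; apply: bigcup_sup.
Qed.

Lemma bigcup_components_closed S (cs : seq {set T}) x y :
  {subset cs <= components S} ->
  x \in \bigcup_(C <- cs) C -> y \in S -> e x y -> y \in \bigcup_(C <- cs) C.
Proof.
move=> sub_cs xU yS exy; have xS := subsetP (bigcup_components_sub sub_cs) x xU.
move: xU; rewrite !bigcup_seq => /bigcupP [C Ccs xC]; apply/bigcupP; exists C => //.
by apply: (component_closed (sub_cs C Ccs) xC); rewrite /induced_rel xS yS exy.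
Qed.

Lemma independent_symdiff Is It U :
  independent e Is -> independent e It -> U \subset symdiff Is It ->
  (forall x y, x \in U -> y \in symdiff Is It -> e x y -> y \in U) ->
  independent e (symdiff Is U).
Proof.
move=> /independentP Is_ind /independentP It_ind /subsetP UsubS closedU.
have memE z : z \in symdiff Is U = if z \in U then z \in It else z \in Is.
  rewrite in_symdiff; case zU: (z \in U); last by case: (z \in Is).
  by move: (UsubS z zU); rewrite in_symdiff; case: (z \in Is); case: (z \in It).
have mixed x y : x \in U -> y \notin U -> x \in It -> y \in Is -> ~~ e x y.
  move=> xU yU xIt yIs; apply/negP => exy.
  case yIt: (y \in It); first by case/negP: (It_ind x y xIt yIt).
  by case/negP: yU; apply: (closedU x) => //; rewrite in_symdiff yIs yIt.
apply/independentP => x y; rewrite !memE.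
case xU: (x \in U); case yU: (y \in U) => xI yI.
- exact: It_ind.
- by apply: mixed; rewrite ?yU.
- by rewrite e_sym; apply: mixed; rewrite ?xU.
- exact: Is_ind.
Qed.

Lemma reconf_seq_components Is It :
  independent e Is -> independent e It ->
  exists s : seq {set T}, reconf_seq e Is It s /\ size s = cc e (symdiff Is It).
Proof.
move=> Is_ind It_ind; set S := symdiff Is It.
have [/eqP coverS /trivIsetP disjP _] := and3P (components_partition S).
set cs := enum (components S).
have prefix_sub k : {subset take k cs <= components S}.
  by move=> C /mem_take; rewrite mem_enum.
have prefixE k : foldl (@symdiff T) Is (take k cs) =
                 symdiff Is (\bigcup_(C <- take k cs) C).
  apply: foldl_symdiff; first by rewrite take_uniq ?enum_uniq.
  by move=> C D /prefix_sub CS /prefix_sub DS; apply: disjP.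
exists (scanl (@symdiff T) Is cs); split; last by rewrite size_scanl -cardE.
apply/and3P; split.
- apply: all_scanl => k; rewrite prefixE.
  apply: (independent_symdiff Is_ind It_ind); first exact: bigcup_components_sub.
  by move=> x y; apply: bigcup_components_closed.
- apply: path_scanl => A C; rewrite /reconf_step symdiffK mem_enum.
  exact: connected_component.
- rewrite last_scanl -(take_size cs) prefixE take_size /cs big_enum /=.
  by rewrite -/(cover _) coverS symdiffK.
Qed.

End Components.

Section Embedding.

Variables (T T' : finType) (e : rel T) (r : rel T') (f : T -> T').
Hypotheses (f_inj : injective f) (f_rel : forall x y, r (f x) (f y) = e x y).
Implicit Types S A B C : {set T}.

Lemma induced_rel_imset S x y :
  induced_rel r (f @: S) (f x) (f y) = induced_rel e S x y.
Proof. by rewrite /induced_rel !mem_imset // f_rel. Qed.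

Lemma connect_induced_imset S x y :
  connect (induced_rel r (f @: S)) (f x) (f y) = connect (induced_rel e S) x y.
Proof.
apply/idP/idP => [/connectP [p pth lst] | /connectP [p pth ->]]; last first.
  apply/connectP; exists (map f p); last by rewrite last_map.
  by apply: homo_path pth => u v; rewrite induced_rel_imset.
elim: p x pth lst => [|z' p IH] x /=; first by move=> _ /f_inj ->.
case/andP => xz pth lst; case/and3P: (xz) => _ /imsetP [z _ zE] _.
rewrite zE induced_rel_imset in xz pth lst.
by apply: connect_trans (connect1 xz) (IH z pth lst).
Qed.

Lemma connected_induced_imset C :
  connected_induced r (f @: C) = connected_induced e C.
Proof.
apply/connected_inducedP/connected_inducedP; rewrite imset_eq0 => -[C0 conn]; split => //.
  by move=> x y xC yC; rewrite -connect_induced_imset conn ?imset_f.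
by move=> _ _ /imsetP [x xC ->] /imsetP [y yC ->]; rewrite connect_induced_imset conn.
Qed.

Lemma cc_imset S : cc r (f @: S) = cc e S.
Proof.
rewrite /cc -imset_comp -[RHS](card_imset _ (imset_inj f_inj)) -imset_comp.
apply: eq_card; apply/setP; apply: eq_in_imset => x xS /=.
apply/setP => y'; apply/idP/imsetP => [|[y + ->]]; rewrite !inE.
  by case/andP => /imsetP [y yS ->]; rewrite connect_induced_imset => xy; exists y; rewrite ?inE ?yS.
by rewrite mem_imset // connect_induced_imset.
Qed.

Lemma imset_symdiff A B : f @: symdiff A B = symdiff (f @: A) (f @: B).
Proof.
apply/setP => y'; rewrite in_symdiff.
have [/imsetP [x _ ->] | y'_out] := boolP (y' \in f @: setT).
  by rewrite !mem_imset // in_symdiff.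
have notin X : y' \in f @: X = false.
  by apply: contraNF y'_out => /imsetP [x _ ->]; rewrite imset_f.
by rewrite !notin.
Qed.

Lemma path_reconf_step_imset A s :
  path (reconf_step e) A s ->
  path (reconf_step r) (f @: A) (map (fun X : {set T} => f @: X) s).
Proof.
by apply: homo_path => X Y; rewrite /reconf_step -imset_symdiff connected_induced_imset.
Qed.

End Embedding.

Section Cycle.

Variable m : nat.
Implicit Types (A B C K : {set 'I_m}) (i : 'I_m).
Local Notation R := (@cycle_rel m).
Local Notation succ := (@ordS m).

Lemma cycle_relE i j : R i j = (succ i == j) || (succ j == i).
Proof. by []. Qed.

Lemma cycle_rel_sym : symmetric R.
Proof. by move=> i j; rewrite !cycle_relE orbC. Qed.

Lemma ordS_cases i : (i.+1 < m /\ succ i = i.+1 :> nat) \/ (i.+1 = m /\ succ i = 0 :> nat).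
Proof.
rewrite /=; case: (ltngtP i.+1 m) => [lt | | eq]; last by right; rewrite eq modnn.
- by left; rewrite modn_small.
- by rewrite ltnS leqNgt ltn_ord.
Qed.

Definition tails A := A :\: succ @^-1: A.

Lemma in_tails A i : (i \in tails A) = (i \in A) && (succ i \notin A).
Proof. by rewrite !inE andbC. Qed.

Lemma tails_not_connected C z1 z2 :
  z1 \in tails C -> z2 \in tails C -> z1 < z2 -> ~~ connect (induced_rel R C) z2 z1.
Proof.
rewrite !in_tails => /andP [z1C S1] /andP [z2C S2] lt12.
have outC z : z \in C -> (succ z1 : nat) <> z /\ (succ z2 : nat) <> z.
  by move=> zC; split => /val_inj eq_z; [move: S1 | move: S2]; rewrite eq_z zC.
(* A walk from z2 inside C is trapped in the arc z1+2 .. z2, whose exits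
   z1+1 and z2+1 lie outside C. *)
have step (u v : 'I_m) : z1.+1 < u <= z2 -> induced_rel R C u v -> z1.+1 < v <= z2.
  move=> /andP [lo hi] /and3P [_ vC]; rewrite cycle_relE => /orP adj.
  have [n1 n2] := outC v vC; have := ltn_ord z2.
  case: adj => /eqP /(congr1 (@nat_of_ord m)) uv;
  case: (ordS_cases z1) => -[? ?]; case: (ordS_cases z2) => -[? ?];
  case: (ordS_cases u) => -[? ?]; case: (ordS_cases v) => -[? ?]; lia.
have start : z1.+1 < z2 <= z2.
  have [out1 _] := outC z2 z2C; have := ltn_ord z2.
  by rewrite leqnn andbT; case: (ordS_cases z1) => -[? ?]; lia.
apply/negP => /(connect_invariant step start).
by rewrite ltnNge leqnSn.
Qed.

Lemma connected_tails C : connected_induced R C -> #|tails C| <= 1.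
Proof.
case/connected_inducedP => _ conn; apply/card_le1_eqP => z1 z2 t1 t2.
have inC z : z \in tails C -> z \in C by rewrite in_tails => /andP [].
case: (ltngtP z1 z2) => [lt | lt | /val_inj //].
- by move: (tails_not_connected t1 t2 lt); rewrite conn ?inC.
- by move: (tails_not_connected t2 t1 lt); rewrite conn ?inC.
Qed.

Definition boundary A := [set i | (i \in A) != (succ i \in A)].

Lemma card_boundary A : #|boundary A| = (#|tails A|).*2.
Proof.
have -> : boundary A = tails A :|: tails (~: A).
  by apply/setP => i; rewrite !inE; case: (i \in A); case: (succ i \in A).
have -> : tails (~: A) = succ @^-1: A :\: A.
  by apply/setP => i; rewrite !inE; case: (i \in A); case: (succ i \in A).
rewrite cardsU (_ : _ :&: _ = set0) ?cards0 ?subn0; last first.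
  by apply/setP => i; rewrite !inE; case: (i \in A); case: (succ i \in A).
by rewrite -addnn !cardsD (card_preimset _ (@ordS_inj m)) setIC.
Qed.

Lemma tails_symdiff A B : #|tails (symdiff A B)| <= #|tails A| + #|tails B|.
Proof.
rewrite -leq_double doubleD -!card_boundary; apply: leq_trans (leq_card_setU _ _).
apply/subset_leq_card/subsetP => i; rewrite !inE.
by case: (i \in A); case: (i \in B); case: (succ i \in A); case: (succ i \in B).
Qed.

Lemma val_iter_ordS i d : iter d succ i = (i + d) %% m :> nat.
Proof.
elim: d => [|d IH] /=; first by rewrite addn0 modn_small.
by rewrite IH addnS -[in LHS]addn1 modnDml addn1.
Qed.

Lemma ordS_closed_setT K i : i \in K -> (forall j, j \in K -> succ j \in K) -> K = setT.
Proof.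
move=> iK closedK; apply/setP => j; rewrite inE.
have -> : j = iter (j + m - i) succ i.
  apply: ord_inj; rewrite val_iter_ordS subnKC ?modnDr ?modn_small //.
  by apply: leq_trans (ltnW (ltn_ord i)) (leq_addl _ _).
by elim: (j + m - i) => //= d; apply: closedK.
Qed.

Lemma component_tail A x : x \in A -> A != setT ->
  exists2 z, z \in tails A & connect (induced_rel R A) x z.
Proof.
move=> xA AnT; set K := [set y in A | connect (induced_rel R A) x y].
have [z /andP [zt] | no_tail] := pickP [pred z | (z \in tails A) && (z \in K)].
  by rewrite inE => /andP [_ xz]; exists z.
case/negP: AnT; rewrite eqEsubset subsetT /=.
rewrite -(ordS_closed_setT (i := x) (K := K)); first by apply/subsetP => y; rewrite inE => /andP [].
  by rewrite inE xA connect0.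
move=> j; rewrite !inE => /andP [jA xj].
have SjA : succ j \in A by move: (no_tail j); rewrite /= !inE jA xj !andbT => /negbFE.
by rewrite SjA (connect_trans xj) // connect1 // /induced_rel jA SjA cycle_relE eqxx.
Qed.

Lemma cc_le_tails A : A != setT -> cc R A <= #|tails A|.
Proof.
move=> AnT; set cls := fun x => [set y in A | connect (induced_rel R A) x y].
apply: leq_trans (leq_imset_card cls (tails A)); apply: subset_leq_card.
apply/subsetP => _ /imsetP [x xA ->]; have [z zt xz] := component_tail xA AnT.
apply/imsetP; exists z => //; apply/setP => y; rewrite !inE.
by rewrite (same_connect (sym_connect_sym (induced_rel_sym cycle_rel_sym A)) xz).
Qed.

Lemma cc_setT : cc R [set: 'I_m] <= 1.
Proof.
apply: leq_trans (_ : #|[set [set: 'I_m]]| <= 1); last by rewrite cards1.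
apply/subset_leq_card/subsetP => _ /imsetP [x _ ->]; rewrite inE; apply/eqP.
apply: (ordS_closed_setT (i := x)) => [|j]; rewrite !inE ?connect0 // => xj.
by apply: connect_trans xj (connect1 _); rewrite /induced_rel !inE cycle_relE eqxx.
Qed.

Lemma tails_le_path_size A s :
  path (reconf_step R) A s ->
  #|tails (symdiff A (last A s))| <= size s.
Proof.
elim: s A => [|B s IH] A /=; first by rewrite symdiffxx /tails set0D cards0.
case/andP => cAB pth; rewrite -(symdiff_trans A B).
apply: leq_trans (tails_symdiff _ _) _.
by rewrite -add1n leq_add ?connected_tails ?IH.
Qed.

Lemma cycle_cc_le_path_size A s :
  path (reconf_step R) A s ->
  cc R (symdiff A (last A s)) <= size s.
Proof.
case: s => [|B s] pth; first by rewrite /= symdiffxx /cc imset0 cards0.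
have [-> | SnT] := eqVneq (symdiff A (last A (B :: s))) setT.
  exact: leq_trans (cc_setT) _.
exact: leq_trans (cc_le_tails SnT) (tails_le_path_size pth).
Qed.

End Cycle.

Lemma cycle_rel_widen n (i j : 'I_n) :
  cycle_rel (widen_ord (leqnSn n) i) (widen_ord (leqnSn n) j) = path_rel i j.
Proof. by rewrite /cycle_rel /path_rel /= !modn_small ?ltnS ?ltn_ord. Qed.

Lemma embeds_in_cycle (T : finType) (e : rel T) :
  is_path_graph e \/ is_cycle_graph e ->
  exists m (pos : T -> 'I_m),
    injective pos /\ forall x y, cycle_rel (pos x) (pos y) = e x y.
Proof.
case=> [[n [f [[g fK gK] fe]]] | [n [_ [f [[g fK gK] fe]]]]].
- exists n.+1, (widen_ord (leqnSn n) \o g); split.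
    move=> x y /= /(congr1 (@nat_of_ord _)) /= /ord_inj; exact: (can_inj gK).
  by move=> x y; rewrite /= cycle_rel_widen -fe !gK.
- by exists n, g; split; [exact: (can_inj gK) | move=> x y; rewrite -fe !gK].
Qed.

Lemma cc_le_reconf_size (T : finType) (e : rel T) m (pos : T -> 'I_m) Is It s :
  injective pos -> (forall x y, cycle_rel (pos x) (pos y) = e x y) ->
  reconf_seq e Is It s -> cc e (symdiff Is It) <= size s.
Proof.
move=> pos_inj pos_rel /and3P [_ pth /eqP <-].
rewrite -(cc_imset pos_inj pos_rel) imset_symdiff // -(last_map (fun X : {set T} => pos @: X)).
rewrite -(size_map (fun X : {set T} => pos @: X)); apply: cycle_cc_le_path_size.
exact: path_reconf_step_imset.
Qed.

Theorem theorem29 (T : finType) (e : rel T) (Is It : {set T}) :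
  simple_graph e ->
  (is_path_graph e \/ is_cycle_graph e) ->
  independent e Is -> independent e It ->
  (exists s : seq {set T}, reconf_seq e Is It s /\ size s = cc e (symdiff Is It)) /\
  (forall s : seq {set T}, reconf_seq e Is It s -> cc e (symdiff Is It) <= size s).
Proof.
move=> [e_sym _] /embeds_in_cycle [m [pos [pos_inj pos_rel]]] Is_ind It_ind.
split; first exact: reconf_seq_components.
by move=> s; apply: cc_le_reconf_size pos_inj pos_rel.
Qed.
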